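(* Let $\varphi,\psi$ be non-negative locally finite Borel measures on $\mathbb R^d$ and let $f$ be a stable constrained density for $(\varphi,\psi)$. Let $X'$ be the set of unexhausted sites and $\Xi'$ the set of unsated centers. If $X'\neq\emptyset$ then $\psi(\Xi')<1$, and if $\Xi'\neq\emptyset$ then $\varphi(X')<1$. In particular, $\varphi(X')<1$ or $\psi(\Xi')<1$.
   Context: A non-negative measurable $f$ on $\mathbb R^d\times\mathbb R^d$ is a constrained density for $(\varphi,\psi)$ if $\int f(x,\xi)\psi(d\xi)\le1$ for all $x$, $\int f(x,\xi)\varphi(dx)\le 1$ for all $\xi$, and $f\le1$ everywhere. A site $x_0$ is exhausted if $\int f(x_0,\xi)\psi(d\xi)=1$ and unexhausted otherwise; a center $\xi_0$ is sated if $\int f(x,\xi_0)\varphi(dx)=1$ and unsated otherwise. $x_0$ desires $\xi_0$ if $f(x_0,\xi_0)<1$ and either $x_0$ is unexhausted or there is $\xi_1$ with $|x_0-\xi_1|>|x_0-\xi_0|$ and $f(x_0,\xi_1)>0$. $\xi_0$ desires $x_0$ if $f(x_0,\xi_0)<1$ and either $\xi_0$ is unsated or there is $x_1$ with $|x_1-\xi_0|>|x_0-\xi_0|$ and $f(x_1,\xi_0)>0$. $f$ is stable if no pair $(x_0,\xi_0)$ exists with $x_0$ desiring $\xi_0$ and $\xi_0$ desiring $x_0$. *)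

(* R^d is modelled as d.-tuple R,
   which MathComp-Analysis equips with the product (= Borel) sigma-algebra of
   the coordinates; R^d x R^d carries the product sigma-algebra. *)
From HB Require Import structures.
From mathcomp Require Import all_boot all_order all_algebra.
From mathcomp Require Import all_classical all_reals all_analysis.

Set Implicit Arguments.
Unset Strict Implicit.
Unset Printing Implicit Defensive.

Import Order.TTheory GRing.Theory Num.Theory.
Local Open Scope classical_set_scope.
Local Open Scope ring_scope.

Section Defs.
Context {R : realType} {d : nat}.

Local Notation T := (d.-tuple R).

Definition edist (x y : T) : R :=
  Num.sqrt (\sum_(i < d) (tnth x i - tnth y i) ^+ 2).

Definition locally_finite (mu : {measure set T -> \bar R}) : Prop :=
  forall x : T, exists2 r : R, 0 < r &
    (mu [set y | (edist x y < r)%R] < +oo)%E.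

Definition site_mass (psi : {measure set T -> \bar R}) (f : T * T -> R) (x : T)
  : \bar R := (\int[psi]_(xi in setT) (f (x, xi))%:E)%E.

Definition center_mass (phi : {measure set T -> \bar R}) (f : T * T -> R)
  (xi : T) : \bar R := (\int[phi]_(x in setT) (f (x, xi))%:E)%E.

Definition constrained_density (phi psi : {measure set T -> \bar R})
  (f : T * T -> R) : Prop :=
  [/\ measurable_fun setT f,
      (forall p, 0 <= f p),
      (forall x, (site_mass psi f x <= 1)%E),
      (forall xi, (center_mass phi f xi <= 1)%E) &
      (forall p, f p <= 1)].

Definition exhausted psi f x : Prop := site_mass psi f x = 1%E.
Definition sated phi f xi : Prop := center_mass phi f xi = 1%E.

Definition site_desires psi (f : T * T -> R) (x0 xi0 : T) : Prop :=
  f (x0, xi0) < 1 /\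
  (~ exhausted psi f x0 \/
   exists xi1, edist x0 xi1 > edist x0 xi0 /\ f (x0, xi1) > 0).

Definition center_desires phi (f : T * T -> R) (x0 xi0 : T) : Prop :=
  f (x0, xi0) < 1 /\
  (~ sated phi f xi0 \/
   exists x1, edist x1 xi0 > edist x0 xi0 /\ f (x1, xi0) > 0).

Definition stable phi psi f : Prop :=
  ~ exists x0 xi0, site_desires psi f x0 xi0 /\ center_desires phi f x0 xi0.

Definition unexhausted_sites psi f : set T := [set x | ~ exhausted psi f x].
Definition unsated_centers phi f : set T := [set xi | ~ sated phi f xi].

End Defs.

(* Mutual desire cannot happen in a stable density, so if a site x0 is
   unexhausted then f(x0, xi) = 1 at every unsated center xi; hence
   psi(Xi') <= \int f(x0, xi) psi(d xi) < 1.  Symmetrically for an unsated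
   center.  Measurability of X' and Xi' follows from Tonelli once local
   finiteness has been upgraded to sigma-finiteness through a countable cover
   by balls with rational centers and radii. *)
From Pilot Require Import Defs.
From HB Require Import structures.
From mathcomp Require Import all_boot all_order all_algebra.
From mathcomp Require Import all_classical all_reals all_analysis.
From mathcomp Require Import measurable_realfun ring lra.

Set Implicit Arguments.
Unset Strict Implicit.
Unset Printing Implicit Defensive.

Import Order.TTheory GRing.Theory Num.Theory.
Local Open Scope classical_set_scope.
Local Open Scope ring_scope.

(* [all_analysis] also exports an [edist] *)
Local Notation edist := Defs.edist.

Section Euclidean_balls.
Variables (R : realType) (d : nat).
Implicit Types (a b c : d.-tuple R) (r : R).

Definition eball c r : set (d.-tuple R) := [set y | edist c y < r].

Lemma coord_le_edist a b i : `|tnth a i - tnth b i| <= edist a b.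
Proof.
rewrite /edist -sqrtr_sqr; apply: ler_wsqrtr.
rewrite (bigD1 i) //= lerDl; apply: sumr_ge0 => j _; exact: sqr_ge0.
Qed.

Lemma edist_le_l1 a b : edist a b <= \sum_(i < d) `|tnth a i - tnth b i|.
Proof.
have [sq_le sum_ge0] : \sum_(i < d) (tnth a i - tnth b i) ^+ 2 <=
    (\sum_(i < d) `|tnth a i - tnth b i|) ^+ 2 /\
    0 <= \sum_(i < d) `|tnth a i - tnth b i|.
  elim/big_rec2: _ => [|i y1 y2 _ [IH1 IH2]]; first by rewrite expr0n.
  have n0 := normr_ge0 (tnth a i - tnth b i).
  have e := real_normK (num_real (tnth a i - tnth b i)).
  split; last by lra.
  rewrite -e; nra.
rewrite /edist -(ger0_norm sum_ge0) -sqrtr_sqr; exact: ler_wsqrtr.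
Qed.

Lemma measurable_edist c : measurable_fun setT (edist c).
Proof.
apply: measurableT_comp; first exact: continuous_measurable_fun (@sqrt_continuous R).
apply: measurable_sum => i; apply: measurable_funX; apply: measurable_funB => //.
exact: measurable_tnth.
Qed.

Lemma measurable_eball c r : measurable (eball c r).
Proof.
have := measurable_edist c measurableT (measurable_itv `]-oo, r[).
by rewrite setTI; congr measurable; apply/seteqP; split => y /=; rewrite in_itv.
Qed.

Lemma edist_le_coord_bound a b e :
  (forall i, `|tnth a i - tnth b i| <= e) -> edist a b <= d%:R * e.
Proof.
move=> ab_le; apply: le_trans (edist_le_l1 a b) _.
by rewrite -[X in X%:R](card_ord d) mulr_natl -sumr_const; exact: ler_sum.
Qed.

Lemma rat_tuple_near c eps : 0 < eps ->
  exists q : d.-tuple rat, forall i, `|tnth c i - ratr (tnth q i)| < eps.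
Proof.
move=> eps0.
have near_coord i : exists q : rat, `|tnth c i - ratr q| < eps.
  have /rat_in_itvoo [q /[!in_itv] /= /andP[q_gt q_lt]] :
    tnth c i - eps < tnth c i + eps by lra.
  by exists q; rewrite ltr_norml; apply/andP; split; lra.
have [q q_near] := choice near_coord.
by exists (mktuple q) => i; rewrite tnth_mktuple.
Qed.

Definition rat_eball (q : d.-tuple rat * rat) := eball (map_tuple ratr q.1) (ratr q.2).

(* With K = d + 1, coordinates within r / 4K^2 of [c] and a radius in
   ]r / 4K, r / 2K[, the l1 bound keeps [c] inside and the ball inside
   [eball c r]. *)
Lemma rat_eball_approx c r : 0 < r ->
  exists q, rat_eball q c /\ rat_eball q `<=` eball c r.
Proof.
move=> r0; pose K : R := d.+1%:R.
have K0 : 0 < K by rewrite ltr0n.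
have dK : d%:R <= K by rewrite ler_nat.
pose eps := r / (4 * K * K).
have eps0 : 0 < eps by rewrite divr_gt0 // !mulr_gt0.
have Keps : K * eps = r / (4 * K) by rewrite /eps; field; rewrite gt_eqF.
have Keps_lt : K * eps < r / 2.
  have K1 : 1 <= K by rewrite ler1n.
  rewrite Keps ltr_pdivrMr ?mulr_gt0 //; nra.
clearbody K eps.
have [s /[!in_itv] /= /andP[s_gt s_lt]] : exists s : rat,
    ratr s \in `](r / (4 * K)), (r / (2 * K))[.
  apply: rat_in_itvoo; rewrite ltr_pM2l // ltf_pV2 ?posrE ?mulr_gt0 //.
  by rewrite ltr_pM2r // ltr_nat.
have Ks : K * ratr s < r / 2.
  have -> : r / 2 = K * (r / (2 * K)) by field; rewrite gt_eqF.
  by rewrite ltr_pM2l.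
have [q q_near] := rat_tuple_near c eps0.
pose ctr : d.-tuple R := map_tuple ratr q.
have ctrE i : tnth ctr i = ratr (tnth q i) by rewrite tnth_map.
exists (q, s); split.
  have ctr_c : edist ctr c <= d%:R * eps.
    by apply: edist_le_coord_bound => i; rewrite ctrE distrC ltW.
  have := ler_wpM2r (ltW eps0) dK; rewrite /rat_eball /eball /=; lra.
move=> y /= ctr_y.
have e0 : 0 <= edist ctr y by exact: sqrtr_ge0.
have c_y : edist c y <= d%:R * (eps + edist ctr y).
  apply: edist_le_coord_bound => i.
  rewrite -[tnth c i](subrK (tnth ctr i)) -addrA.
  apply: le_trans (ler_normD _ _) _; apply: lerD; last exact: coord_le_edist.
  by rewrite ctrE ltW.
have := ler_wpM2r (addr_ge0 (ltW eps0) e0) dK.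
have : K * edist ctr y < K * ratr s by rewrite ltr_pM2l.
rewrite /eball /=; lra.
Qed.

Lemma locally_finite_sigma_finite (mu : {measure set (d.-tuple R) -> \bar R}) :
  locally_finite mu -> sigma_finite setT mu.
Proof.
move=> mu_lf.
pose F n : set (d.-tuple R) :=
  if @unpickle (d.-tuple rat * rat)%type n is Some q then
    if pselect (mu (rat_eball q) < +oo)%E then rat_eball q else set0
  else set0.
exists F; last first.
  move=> n; rewrite /F; case: unpickle => [q|]; last by rewrite measure0.
  case: pselect => /= [mu_fin|_]; last by rewrite measure0.
  by split=> //; exact: measurable_eball.
apply/seteqP; split => [c _|//].
have [r r0 mu_ball] := mu_lf c.
have [q [q_c q_sub]] := rat_eball_approx c r0.
exists (pickle q) => //; rewrite /F pickleK; case: pselect => // -[].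
by apply: le_lt_trans mu_ball; apply: le_measure => //; rewrite inE;
  exact: measurable_eball.
Qed.

End Euclidean_balls.

Section locally_finite_tonelli.
Variables (R : realType) (d : nat) (mu : {measure set (d.-tuple R) -> \bar R}).
Hypothesis mu_lf : locally_finite mu.

(* [mu] under a name carrying its sigma-finite structure, for Tonelli *)
Let sfmu := (mu : set (d.-tuple R) -> \bar R).
HB.instance Definition _ := Measure.copy sfmu mu.
HB.instance Definition _ :=
  @Measure_isSigmaFinite.Build _ _ _ sfmu (locally_finite_sigma_finite mu_lf).

Variables (dT : measure_display) (T : measurableType dT).

Lemma measurable_integral_snd (f : T * d.-tuple R -> R) :
  measurable_fun setT f -> (forall p, 0 <= f p) ->
  measurable_fun setT (fun x => (\int[mu]_(y in setT) (f (x, y))%:E)%E).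
Proof.
move=> mf f0; apply: (@measurable_fun_fubini_tonelli_F _ _ T _ R sfmu (EFin \o f)).
  exact/measurable_EFinP.
by move=> p; rewrite lee_fin.
Qed.

Lemma measurable_integral_fst (f : d.-tuple R * T -> R) :
  measurable_fun setT f -> (forall p, 0 <= f p) ->
  measurable_fun setT (fun y => (\int[mu]_(x in setT) (f (x, y))%:E)%E).
Proof.
move=> mf f0; apply: (@measurable_fun_fubini_tonelli_G _ _ _ T R sfmu (EFin \o f)).
  exact/measurable_EFinP.
by move=> p; rewrite lee_fin.
Qed.

End locally_finite_tonelli.

Lemma measure_le_integral (dT : measure_display) (T : measurableType dT)
    (R : realType) (mu : {measure set T -> \bar R}) (A : set T) (g : T -> R) :
  measurable A -> measurable_fun setT g -> (forall x, 0 <= g x) ->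
  (forall x, A x -> g x = 1) ->
  (mu A <= \int[mu]_(x in setT) (g x)%:E)%E.
Proof.
move=> mA mg g0 gA1.
rewrite -[X in (X <= _)%E]mul1e -integral_cst //.
rewrite (eq_integral (fun x => (g x)%:E)); last by move=> x /[!inE] /gA1 ->.
apply: ge0_subset_integral => //; first exact/measurable_EFinP.
by move=> x _; rewrite lee_fin.
Qed.

Section stable_density.
Variables (R : realType) (d : nat) (phi psi : {measure set (d.-tuple R) -> \bar R}).
Variable f : d.-tuple R * d.-tuple R -> R.
Hypotheses (phi_lf : locally_finite phi) (psi_lf : locally_finite psi).
Hypotheses (f_cd : constrained_density phi psi f) (f_stable : stable phi psi f).

Lemma measurable_unexhausted_sites : measurable (unexhausted_sites psi f).
Proof.
case: f_cd => mf f0 _ _ _.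
have := measurable_integral_snd psi_lf mf f0 measurableT
  (measurableC (emeasurable_set1 1%E)).
by rewrite setTI.
Qed.

Lemma measurable_unsated_centers : measurable (unsated_centers phi f).
Proof.
case: f_cd => mf f0 _ _ _.
have := measurable_integral_fst phi_lf mf f0 measurableT
  (measurableC (emeasurable_set1 1%E)).
by rewrite setTI.
Qed.

Lemma unexhausted_unsated_eq1 x xi :
  unexhausted_sites psi f x -> unsated_centers phi f xi -> f (x, xi) = 1.
Proof.
case: f_cd => _ _ _ _ f1 x_unex xi_uns; apply/eqP; rewrite eq_le f1 leNgt /=.
by apply/negP => f_lt1; apply: f_stable; exists x, xi; split; split=> //; left.
Qed.

Lemma unsated_centers_lt1 : unexhausted_sites psi f !=set0 ->
  (psi (unsated_centers phi f) < 1)%E.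
Proof.
case: f_cd => mf f0 site_le1 _ _ [x x_unex].
have site_lt1 : (site_mass psi f x < 1)%E.
  by rewrite lt_neqAle site_le1 andbT; apply/eqP.
apply: le_lt_trans site_lt1; apply: measure_le_integral => //.
- exact: measurable_unsated_centers.
- by apply: measurableT_comp mf _; exact: pair1_measurable.
- by move=> xi /(unexhausted_unsated_eq1 x_unex).
Qed.

Lemma unexhausted_sites_lt1 : unsated_centers phi f !=set0 ->
  (phi (unexhausted_sites psi f) < 1)%E.
Proof.
case: f_cd => mf f0 _ center_le1 _ [xi xi_uns].
have center_lt1 : (center_mass phi f xi < 1)%E.
  by rewrite lt_neqAle center_le1 andbT; apply/eqP.
apply: le_lt_trans center_lt1; apply: measure_le_integral => //.
- exact: measurable_unexhausted_sites.
- by apply: measurableT_comp mf _; exact: pair2_measurable.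
- by move=> x /unexhausted_unsated_eq1; apply.
Qed.

End stable_density.

Theorem mainTheorem6 (R : realType) (d : nat)
  (phi psi : {measure set (d.-tuple R) -> \bar R})
  (f : d.-tuple R * d.-tuple R -> R) :
  locally_finite phi -> locally_finite psi ->
  constrained_density phi psi f -> stable phi psi f ->
  [/\ (unexhausted_sites psi f !=set0 ->
         (psi (unsated_centers phi f) < 1)%E),
      (unsated_centers phi f !=set0 ->
         (phi (unexhausted_sites psi f) < 1)%E) &
      ((phi (unexhausted_sites psi f) < 1)%E \/
       (psi (unsated_centers phi f) < 1)%E)].
Proof.
move=> phi_lf psi_lf f_cd f_stable.
have centers_lt1 := unsated_centers_lt1 phi_lf f_cd f_stable.
have sites_lt1 := unexhausted_sites_lt1 psi_lf f_cd f_stable.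
split=> //; have [/centers_lt1|no_unex] := pselect (unexhausted_sites psi f !=set0).
  by right.
by left; rewrite (_ : unexhausted_sites psi f = set0) ?measure0 //;
  apply/seteqP; split=> // x x_unex; apply: no_unex; exists x.
Qed.
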